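(* Every injective probabilistic metric space (i.e. injective $\Delta$-category) is exponentiable in $\mathsf{Cat}(\Delta)$; in particular the $\Delta$-category $(\Delta,\hom)$ is exponentiable in $\mathsf{Cat}(\Delta)$. Furthermore, the full subcategory of $\mathsf{Cat}(\Delta)$ consisting of all injective $\Delta$-categories is Cartesian closed.
   Context: $\Delta$ is the set of monotone maps $f:[0,\infty]\to[0,1]$ that are left continuous ($f(x)=\bigvee_{y<x}f(y)$), ordered pointwise; it is a quantale with $(f\otimes g)(t)=\bigvee_{r+s\le t}f(r)\cdot g(s)$ and neutral element $\varepsilon$ given by $\varepsilon(0)=0$, $\varepsilon(t)=1$ for $t>0$; $\hom(f,-)$ is the right adjoint of $f\otimes-$. A $\Delta$-category $(X,a)$ is a set with $a:X\times X\to\Delta$ such that $\varepsilon\le a(x,x)$ and $a(x,y)\otimes a(y,z)\le a(x,z)$; a $\Delta$-functor $f:(X,a)\to(Y,b)$ is a map with $a(x,y)\le b(f(x),f(y))$; these form $\mathsf{Cat}(\Delta)$. Fully faithful means $a(x,y)=b(f(x),f(y))$. Products in $\mathsf{Cat}(\Delta)$ have structure $a(x,x')\wedge b(y,y')$. For $\Delta$-functors $f,g:X\to Y$, $f\simeq g$ means $\varepsilon\le b(f(x),g(x))$ and $\varepsilon\le b(g(x),f(x))$ for all $x$. A $\Delta$-category $X$ is injective if for every fully faithful $i:A\to B$ and every $f:A\to X$ there is $g:B\to X$ with $g\cdot i\simeq f$. $X$ is exponentiable if $X\times-$ has a right adjoint. *)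

From HB Require Import structures.
From mathcomp Require Import all_boot all_order all_algebra.
From mathcomp Require Import boolp classical_sets reals.
Set Implicit Arguments. Unset Strict Implicit. Unset Printing Implicit Defensive.
Import Order.TTheory GRing.Theory Num.Theory.
Local Open Scope classical_set_scope.
Local Open Scope ring_scope.

Section Delta.
Variable R : realType.

(* An element of Delta is represented by its restriction to [0, oo), extended
   by 0 on the negative reals (f(0) = 0 is forced by left continuity, and the
   value at +oo is forced to be the sup of the finite values). *)
Definition isDelta (f : R -> R) : Prop :=
  [/\ (forall x, x <= 0 -> f x = 0),
      (forall x, 0 <= f x <= 1),
      (forall x y, x <= y -> f x <= f y) &
      (forall x, 0 < x -> f x = sup [set f y | y in [set y | y < x]])].

Definition dle (f g : R -> R) : Prop := forall t, 0 <= t -> f t <= g t.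
Definition deq (f g : R -> R) : Prop := forall t, 0 <= t -> f t = g t.

Definition eps : R -> R := fun t => if t <= 0 then 0 else 1.

Definition tensor (f g : R -> R) : R -> R := fun t =>
  sup [set x | exists r s, [/\ 0 <= r, 0 <= s, r + s <= t & x = f r * g s]].

(* hom(f,-), the right adjoint of f (x) - : the join of all h in Delta
   with f (x) h <= g *)
Definition homD (f g : R -> R) : R -> R := fun t =>
  sup [set x | exists h, [/\ isDelta h, dle (tensor f h) g & x = h t]].

Record DStruct := DStr { car : Type; dist : car -> car -> R -> R }.
Arguments dist : clear implicits.

Definition isDCat (X : DStruct) : Prop :=
  [/\ (forall x y, isDelta (dist X x y)),
      (forall x, dle eps (dist X x x)) &
      (forall x y z, dle (tensor (dist X x y) (dist X y z)) (dist X x z))].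

Definition functor (X Y : DStruct) (f : car X -> car Y) : Prop :=
  forall x x', dle (dist X x x') (dist Y (f x) (f x')).

Definition fully_faithful (X Y : DStruct) (f : car X -> car Y) : Prop :=
  forall x x', deq (dist X x x') (dist Y (f x) (f x')).

Definition meq (X Y : DStruct) (f g : car X -> car Y) : Prop :=
  forall x, f x = g x.

Definition fiso (X Y : DStruct) (f g : car X -> car Y) : Prop :=
  forall x, dle eps (dist Y (f x) (g x)) /\ dle eps (dist Y (g x) (f x)).

Definition dinjective (X : DStruct) : Prop :=
  forall (A B : DStruct) (i : car A -> car B), isDCat A -> isDCat B ->
    functor i -> fully_faithful i ->
    forall f : car A -> car X, functor f ->
      exists g : car B -> car X, functor g /\ fiso (g \o i) f.

Definition terminal_in (S : DStruct -> Prop) (T : DStruct) : Prop :=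
  S T /\ forall Z, S Z ->
    (exists f : car Z -> car T, functor f) /\
    (forall f g : car Z -> car T, functor f -> functor g -> meq f g).

Definition product_in (S : DStruct -> Prop) (X Y P : DStruct)
  (p1 : car P -> car X) (p2 : car P -> car Y) : Prop :=
  [/\ S P, functor p1, functor p2 &
    forall Z, S Z -> forall (f1 : car Z -> car X) (f2 : car Z -> car Y),
      functor f1 -> functor f2 ->
      (exists h : car Z -> car P, [/\ functor h, meq (p1 \o h) f1 & meq (p2 \o h) f2]) /\
      (forall h h' : car Z -> car P, functor h -> functor h' ->
         meq (p1 \o h) f1 -> meq (p2 \o h) f2 ->
         meq (p1 \o h') f1 -> meq (p2 \o h') f2 -> meq h h')].

(* g : Z -> E and a morphism h : Q -> P between products Q = X x Z, P = X x E
   realise "1_X x g", i.e. p1 h = q1 and p2 h = g q2 *)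
Definition is_idx (X Z E P Q : DStruct)
  (p1 : car P -> car X) (p2 : car P -> car E)
  (q1 : car Q -> car X) (q2 : car Q -> car Z)
  (g : car Z -> car E) (h : car Q -> car P) : Prop :=
  [/\ functor h, meq (p1 \o h) q1 & meq (p2 \o h) (g \o q2)].

(* X x - has a right adjoint in S, expressed through exponential objects
   (universal arrows from X x - to each Y), for arbitrary product cones. *)
Definition exponentiable_in (S : DStruct -> Prop) (X : DStruct) : Prop :=
  forall Y, S Y ->
  exists (E P : DStruct) (p1 : car P -> car X) (p2 : car P -> car E)
         (ev : car P -> car Y),
    [/\ S E, @product_in S X E P p1 p2, functor ev &
      forall Z, S Z ->
      forall (Q : DStruct) (q1 : car Q -> car X) (q2 : car Q -> car Z),
        @product_in S X Z Q q1 q2 ->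
        forall f : car Q -> car Y, functor f ->
          (exists g : car Z -> car E, functor g /\
             exists h, is_idx p1 p2 q1 q2 g h /\ meq (ev \o h) f) /\
          (forall g g' : car Z -> car E, functor g -> functor g' ->
             (exists h, is_idx p1 p2 q1 q2 g h /\ meq (ev \o h) f) ->
             (exists h', is_idx p1 p2 q1 q2 g' h' /\ meq (ev \o h') f) ->
             meq g g')].

Definition exponentiable (X : DStruct) : Prop := exponentiable_in isDCat X.

Definition cartesian_closed (S : DStruct -> Prop) : Prop :=
  [/\ (exists T, terminal_in S T),
      (forall X Y, S X -> S Y -> exists P p1 p2, @product_in S X Y P p1 p2) &
      (forall X, S X -> exponentiable_in S X)].

Definition InjCat (X : DStruct) : Prop := isDCat X /\ dinjective X.

Definition DeltaSet : Type := {f : R -> R | isDelta f}.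
Definition DeltaCat : DStruct :=
  @DStr DeltaSet (fun f g => homD (proj1_sig f) (proj1_sig g)).

End Delta.
Arguments dist {R}.

(* The exponential [Y^X] is the Delta-category of Delta-functors [X -> Y] with
   [d(phi, psi)] the largest [w] such that [w /\ d(x, x') <= d(phi x, psi x')];
   currying gives its universal property once it is a Delta-category, and the
   only nontrivial axiom is transitivity.  Given bounds [u] for [(phi, psi)] and
   [v] for [(psi, chi)], points [x0, x2] and a split [r + s < t], adjoin to [X] a
   formal point at distances [u r] after [x0] and [v s] before [x2]; if [X] is
   injective this point is realised by some [x1] in [X], and the triangle through
   [psi x1] shows that [u (x) v] bounds [(phi, chi)].  Injectivity passes to
   products and to [Y^X] (extending along [i] in [Y^X] is extending along
   [X x i] in [Y]), [(Delta, hom)] is injective by left Kan extension, and the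
   one-point space is injective and terminal. *)

From Pilot Require Import Defs.
From HB Require Import structures.
From mathcomp Require Import all_boot all_order all_algebra.
From mathcomp Require Import boolp classical_sets reals.
From mathcomp Require Import lra.
Set Implicit Arguments. Unset Strict Implicit. Unset Printing Implicit Defensive.
Import Order.TTheory GRing.Theory Num.Theory.
Local Open Scope classical_set_scope.
Local Open Scope ring_scope.

Section DeltaQuantale.
Variable R : realType.
Implicit Types (E : set R) (f g h : R -> R).
Local Notation eps := (@Defs.eps R).

(** * The quantale Delta *)

Lemma le_sup_bounded E b x : (forall y, E y -> y <= b) -> E x -> x <= sup E.
Proof. by move=> Hb Ex; apply: ub_le_sup => //; exists b. Qed.

(* [sup] of an empty or unbounded set is [0], hence the hypothesis [0 <= K]. *)
Lemma sup_le_nonneg E K : 0 <= K -> (forall y, E y -> y <= K) -> sup E <= K.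
Proof.
move=> K0 HK; have [nE|nE] := EM (E !=set0); first exact: ge_sup.
by rewrite sup_out // => -[].
Qed.

Lemma sup_ge0_bounded E : (forall y, E y -> 0 <= y <= 1) -> 0 <= sup E.
Proof.
move=> H; have [[y Ey]|nE] := EM (E !=set0); last by rewrite sup_out // => -[].
have /andP[y0 _] := H y Ey; apply: le_trans y0 (@le_sup_bounded _ 1 _ _ Ey).
by move=> z /H /andP[].
Qed.

Lemma sup_mulr_le E c K : 0 <= c -> 0 <= K -> (forall y, E y -> y * c <= K) ->
  sup E * c <= K.
Proof.
move=> c0 K0 H; have [->|cn0] := eqVneq c 0; first by rewrite mulr0.
have cp : 0 < c by rewrite lt_def cn0.
rewrite -ler_pdivlMr //; apply: sup_le_nonneg; first by rewrite divr_ge0.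
by move=> y Ey; rewrite ler_pdivlMr // H.
Qed.

Lemma sup_mull_le E c K : 0 <= c -> 0 <= K -> (forall y, E y -> c * y <= K) ->
  c * sup E <= K.
Proof. by move=> c0 K0 H; rewrite mulrC; apply: sup_mulr_le => // y /H; rewrite mulrC. Qed.

Section DeltaElement.
Variable f : R -> R.
Hypothesis Df : isDelta f.

Lemma Delta_le0 x : x <= 0 -> f x = 0.
Proof. by case: Df => H *; apply: H. Qed.

Lemma Delta_ge0 x : 0 <= f x.
Proof. by case: Df => _ H *; case/andP: (H x). Qed.

Lemma Delta_le1 x : f x <= 1.
Proof. by case: Df => _ H *; case/andP: (H x). Qed.

Lemma Delta_mono x y : x <= y -> f x <= f y.
Proof. by case: Df => _ _ H *; apply: H. Qed.

Lemma Delta_pos x : 0 < f x -> 0 < x.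
Proof. by case: (leP x 0) => // x0; rewrite Delta_le0 // ltxx. Qed.

Lemma Delta_approx x v : v < f x -> exists2 y, y < x & v < f y.
Proof.
have [x0|x0] := leP x 0.
  by rewrite Delta_le0 // => v0; exists (x - 1); [lra|rewrite Delta_le0 //; lra].
have [_ _ _ ->] := Df => //.
move=> vf; have [|_ [y /= yx <-] vy] := sup_gt _ vf; last by exists y.
by exists (f (x - 1)), (x - 1) => //=; lra.
Qed.

Lemma Delta_le_eps : dle f eps.
Proof. by move=> t _; rewrite /eps; case: ifP => [/Delta_le0 ->|_]; rewrite ?Delta_le1. Qed.

End DeltaElement.

Lemma isDelta_intro f : (forall x, x <= 0 -> f x = 0) -> (forall x, 0 <= f x <= 1) ->
  (forall x y, x <= y -> f x <= f y) ->
  (forall x v, 0 < x -> v < f x -> exists2 y, y < x & v < f y) -> isDelta f.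
Proof.
move=> f0 f01 fmono fapprox; split => // x x0; apply/eqP; rewrite eq_le; apply/andP; split.
  rewrite leNgt; apply/negP => /(fapprox x _ x0) [y yx]; apply/negP; rewrite -leNgt.
  by apply: (@le_sup_bounded _ 1) => [_ [z _ <-]|]; [case/andP: (f01 z)|exists y].
by apply: sup_le_nonneg => [|_ [y /= /ltW yx <-]]; [case/andP: (f01 x)|exact: fmono].
Qed.

Lemma eps_Delta : isDelta eps.
Proof.
apply: isDelta_intro; rewrite /eps.
- by move=> x ->.
- by move=> x; case: ifP; rewrite lexx ler01.
- by move=> x y xy; case: (leP x 0) => hx; case: (leP y 0) => hy //; lra.
- move=> x v x0; case: (leP x 0) => hx; first lra.
  by move=> v1; exists (x / 2); [lra|case: (leP (x / 2) 0) => h; lra].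
Qed.

Lemma eps_gt0 t : 0 < t -> eps t = 1.
Proof. by rewrite /eps; case: leP => // h; lra. Qed.

Definition step (r a : R) : R -> R := fun t => if t <= r then 0 else a.

Lemma step_Delta r a : 0 <= r -> 0 <= a <= 1 -> isDelta (step r a).
Proof.
move=> r0 a01; apply: isDelta_intro; rewrite /step.
- by move=> x x0; rewrite (le_trans x0 r0).
- by move=> x; case: ifP; rewrite ?lexx ?ler01.
- by move=> x y xy; case/andP: a01 => a0 _; case: (leP x r); case: (leP y r) => //; lra.
- move=> x v x0; case: (leP x r) => [xr v0|rx va].
    by exists (x - 1); [lra|rewrite ifT //; lra].
  by exists ((x + r) / 2); [lra|case: (leP ((x + r) / 2) r) => h; lra].
Qed.

Lemma step_gt r a t : r < t -> step r a t = a.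
Proof. by rewrite /step; case: leP => // h; lra. Qed.

Definition dmin f g : R -> R := fun t => Num.min (f t) (g t).

Lemma dmin_Delta f g : isDelta f -> isDelta g -> isDelta (dmin f g).
Proof.
move=> Df Dg; apply: isDelta_intro; rewrite /dmin.
- by move=> x x0; rewrite (Delta_le0 Df) // (Delta_le0 Dg) // minxx.
- by move=> x; rewrite le_min !Delta_ge0 // ge_min (Delta_le1 Df).
- by move=> x y xy; rewrite le_min !ge_min (Delta_mono Df xy) (Delta_mono Dg xy) orbT.
- move=> x v x0; rewrite lt_min => /andP[/(Delta_approx Df) [y1 y1x v1]].
  move=> /(Delta_approx Dg) [y2 y2x v2]; exists (Num.max y1 y2); first by rewrite gt_max y1x y2x.
  rewrite lt_min (lt_le_trans v1) ?(lt_le_trans v2) //.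
    by rewrite (Delta_mono Dg) // le_max lexx orbT.
  by rewrite (Delta_mono Df) // le_max lexx.
Qed.

Lemma dle_refl f : dle f f.
Proof. by []. Qed.

Lemma dle_trans f g h : dle f g -> dle g h -> dle f h.
Proof. by move=> fg gh t t0; apply: le_trans (fg t t0) (gh t t0). Qed.

Lemma deq_le f g : deq f g -> dle f g.
Proof. by move=> fg t t0; rewrite fg. Qed.

Lemma deq_ge f g : deq f g -> dle g f.
Proof. by move=> fg t t0; rewrite fg. Qed.

Lemma dmin_lel f g : dle (dmin f g) f.
Proof. by move=> t _; rewrite /dmin ge_min lexx. Qed.

Lemma dmin_ler f g : dle (dmin f g) g.
Proof. by move=> t _; rewrite /dmin ge_min lexx orbT. Qed.

Lemma dle_dmin f g h : dle h f -> dle h g -> dle h (dmin f g).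
Proof. by move=> hf hg t t0; rewrite /dmin le_min hf ?hg. Qed.

Definition psup (F : set (R -> R)) : R -> R := fun t => sup [set w t | w in F].

Section PointwiseSup.
Variable F : set (R -> R).
Hypothesis DF : forall w, F w -> isDelta w.

Lemma psup_ub w t : F w -> w t <= psup F t.
Proof.
move=> Fw; apply: (@le_sup_bounded _ 1); last by exists w.
by move=> _ [w' /DF Dw' <-]; apply: Delta_le1.
Qed.

Lemma psup_le t K : 0 <= K -> (forall w, F w -> w t <= K) -> psup F t <= K.
Proof. by move=> K0 H; apply: sup_le_nonneg => // _ [w Fw <-]; apply: H. Qed.

Lemma psup_ge0 t : 0 <= psup F t.
Proof. by apply: sup_ge0_bounded => _ [w /DF Dw <-]; rewrite Delta_ge0 ?Delta_le1. Qed.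

Lemma psup_approx t v : 0 <= v -> v < psup F t -> exists2 w, F w & v < w t.
Proof.
move=> v0 vs; have [nF|nF] := EM ([set w t | w in F] !=set0).
  by have [_ [w Fw <-] vw] := sup_gt nF vs; exists w.
by move: vs; rewrite /psup sup_out // => [|[]]; [lra|].
Qed.

Lemma psup_Delta : isDelta (psup F).
Proof.
apply: isDelta_intro.
- move=> x x0; apply/eqP; rewrite eq_le psup_ge0 andbT.
  by apply: psup_le => // w /DF Dw; rewrite Delta_le0.
- by move=> x; rewrite psup_ge0 psup_le // => w /DF/Delta_le1.
- move=> x y xy; apply: psup_le; first exact: psup_ge0.
  by move=> w Fw; apply: le_trans (Delta_mono (DF Fw) xy) (psup_ub _ Fw).
- move=> x v x0 vs; have [v0|v0] := ltP v 0.
    by exists 0 => //; apply: lt_le_trans v0 (psup_ge0 _).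
  have [w Fw /(Delta_approx (DF Fw)) [y yx vy]] := psup_approx v0 vs.
  by exists y => //; apply: lt_le_trans vy (psup_ub _ Fw).
Qed.

End PointwiseSup.

Lemma mul_lt_shrinkl (v p q : R) : 0 <= v -> v < p * q -> 0 <= p -> 0 <= q ->
  exists2 a, a < p & v < a * q.
Proof.
move=> v0 vpq p0 q0; have qp : 0 < q.
  by rewrite lt_def q0 andbT; apply: contraTneq vpq => ->; rewrite mulr0 -leNgt.
have h : v / q < p by rewrite ltr_pdivrMr.
by exists ((v / q + p) / 2); [lra|rewrite -ltr_pdivrMr //; lra].
Qed.

Lemma tensor_le f g t K : 0 <= K ->
  (forall r s, 0 <= r -> 0 <= s -> r + s <= t -> f r * g s <= K) -> tensor f g t <= K.
Proof. by move=> K0 H; apply: sup_le_nonneg => // _ [r [s [r0 s0 rst ->]]]; apply: H. Qed.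

Section Tensor.
Variables f g : R -> R.
Hypotheses (Df : isDelta f) (Dg : isDelta g).

Let Dfg01 r s : 0 <= f r * g s <= 1.
Proof.
by rewrite mulr_ge0 ?mulr_ile1 ?(Delta_ge0 Df) ?(Delta_ge0 Dg) ?(Delta_le1 Df) ?(Delta_le1 Dg).
Qed.

Lemma tensor_ub r s t : 0 <= r -> 0 <= s -> r + s <= t -> f r * g s <= tensor f g t.
Proof.
move=> r0 s0 rst; apply: (@le_sup_bounded _ 1); last by exists r, s.
by move=> _ [r' [s' [_ _ _ ->]]]; case/andP: (Dfg01 r' s').
Qed.

Lemma tensor_ge0 t : 0 <= tensor f g t.
Proof. by apply: sup_ge0_bounded => _ [r [s [_ _ _ ->]]]. Qed.

Lemma tensor_approx t v : 0 <= v -> v < tensor f g t ->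
  exists r s, [/\ 0 < r, 0 < s, r + s < t & v < f r * g s].
Proof.
move=> v0 vt.
pose E := [set x | exists r s, [/\ 0 <= r, 0 <= s, r + s <= t & x = f r * g s]].
have [nE|nE] := EM (E !=set0); last first.
  by move: vt; rewrite /tensor sup_out // => [|[]]; [lra|].
have [_ [r [s [r0 s0 rst ->]]] vrs] := sup_gt nE vt.
have [a /(Delta_approx Df) [r1 r1r ar1] va] :=
  mul_lt_shrinkl v0 vrs (Delta_ge0 Df r) (Delta_ge0 Dg s).
have v1 : v < g s * f r1 by rewrite mulrC (lt_le_trans va) // ler_wpM2r ?Delta_ge0 ?ltW.
have [b /(Delta_approx Dg) [s1 s1s bs1] vb] :=
  mul_lt_shrinkl v0 v1 (Delta_ge0 Dg s) (Delta_ge0 Df r1).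
have v2 : v < f r1 * g s1 by rewrite mulrC (lt_le_trans vb) // ler_wpM2r ?Delta_ge0 ?ltW.
have pos : 0 < f r1 * g s1 by apply: le_lt_trans v0 v2.
exists r1, s1; split => //.
- apply: (Delta_pos Df); rewrite lt_def Delta_ge0 // andbT.
  by apply: contraTneq pos => ->; rewrite mul0r ltxx.
- apply: (Delta_pos Dg); rewrite lt_def Delta_ge0 // andbT.
  by apply: contraTneq pos => ->; rewrite mulr0 ltxx.
- by apply: lt_le_trans rst; rewrite ltr_leD // ltW.
Qed.

Lemma tensor_Delta : isDelta (tensor f g).
Proof.
apply: isDelta_intro.
- move=> x x0; apply/eqP; rewrite eq_le tensor_ge0 andbT.
  apply: tensor_le => // r s r0 s0 rsx.
  by rewrite (Delta_le0 Df) ?mul0r //; lra.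
- by move=> x; rewrite tensor_ge0 tensor_le // => r s *; case/andP: (Dfg01 r s).
- move=> x y xy; apply: tensor_le; first exact: tensor_ge0.
  by move=> r s r0 s0 rsx; apply: tensor_ub => //; lra.
- move=> x v x0 vx; have [v0|v0] := ltP v 0.
    by exists 0 => //; apply: lt_le_trans v0 (tensor_ge0 _).
  have [r [s [r0 s0 rsx vrs]]] := tensor_approx v0 vx.
  by exists (r + s) => //; apply: lt_le_trans vrs (tensor_ub _ _ _); lra.
Qed.

End Tensor.

Lemma tensorC f g t : tensor f g t = tensor g f t.
Proof.
rewrite /tensor; congr sup; apply: funext => x; apply: propext.
by split=> -[r [s [r0 s0 rst ->]]]; exists s, r; rewrite addrC mulrC.
Qed.

Lemma tensor_mono f f' g g' : isDelta f -> isDelta f' -> isDelta g -> isDelta g' ->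
  dle f f' -> dle g g' -> dle (tensor f g) (tensor f' g').
Proof.
move=> Df Df' Dg Dg' ff' gg' t t0.
apply: tensor_le; first exact: tensor_ge0.
move=> r s r0 s0 rst; apply: le_trans (tensor_ub Df' Dg' r0 s0 rst).
by rewrite ler_pM ?Delta_ge0 ?ff' ?gg'.
Qed.

Section TensorAssoc.
Variables f g h : R -> R.
Hypotheses (Df : isDelta f) (Dg : isDelta g) (Dh : isDelta h).

Let Dfg := tensor_Delta Df Dg.
Let Dgh := tensor_Delta Dg Dh.

Lemma tensorA_le : dle (tensor f (tensor g h)) (tensor (tensor f g) h).
Proof.
move=> t t0; apply: tensor_le; first exact: tensor_ge0 Dfg Dh t.
move=> r s r0 s0 rst; apply: sup_mull_le; rewrite ?(Delta_ge0 Df) ?(tensor_ge0 Dfg Dh) //.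
move=> _ [s1 [s2 [s10 s20 s12 ->]]]; rewrite mulrA.
apply: le_trans (_ : tensor f g (r + s1) * h s2 <= _).
  by rewrite ler_wpM2r ?(Delta_ge0 Dh) ?(tensor_ub Df Dg).
by apply: (tensor_ub Dfg Dh); rewrite ?addr_ge0 //; lra.
Qed.

Lemma tensorA_ge : dle (tensor (tensor f g) h) (tensor f (tensor g h)).
Proof.
move=> t t0; apply: tensor_le; first exact: tensor_ge0 Df Dgh t.
move=> r s r0 s0 rst; apply: sup_mulr_le; rewrite ?(Delta_ge0 Dh) ?(tensor_ge0 Df Dgh) //.
move=> _ [r1 [r2 [r10 r20 r12 ->]]]; rewrite -mulrA.
apply: le_trans (_ : f r1 * tensor g h (r2 + s) <= _).
  by rewrite ler_wpM2l ?(Delta_ge0 Df) ?(tensor_ub Dg Dh).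
by apply: (tensor_ub Df Dgh); rewrite ?addr_ge0 //; lra.
Qed.

End TensorAssoc.

Lemma tensor_epsr f : isDelta f -> deq (tensor f eps) f.
Proof.
move=> Df t t0; apply/eqP; rewrite eq_le; apply/andP; split.
  apply: tensor_le => [|r s r0 s0 rst]; first exact: Delta_ge0.
  rewrite -[leRHS]mulr1 ler_pM ?(Delta_ge0 Df) ?(Delta_ge0 eps_Delta) ?(Delta_le1 eps_Delta) //.
  by apply: (Delta_mono Df); lra.
have Dfe := tensor_Delta Df eps_Delta.
have [->|tn0] := eqVneq t 0; first by rewrite (Delta_le0 Df) // (Delta_ge0 Dfe).
have tp : 0 < t by rewrite lt_def tn0.
have [_ _ _ ->] := Df => //.
apply: sup_le_nonneg => [|_ [y /= yt <-]]; first exact: Delta_ge0 Dfe _.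
have [y0|y0] := leP y 0; first by rewrite (Delta_le0 Df) // (Delta_ge0 Dfe).
rewrite -[f y]mulr1 -(@eps_gt0 (t - y)); last lra.
by apply: (tensor_ub Df eps_Delta); lra.
Qed.

Lemma tensor_epsl f : isDelta f -> deq (tensor eps f) f.
Proof. by move=> Df t t0; rewrite tensorC tensor_epsr. Qed.

Lemma tensor_monol f f' g : isDelta f -> isDelta f' -> isDelta g -> dle f f' ->
  dle (tensor f g) (tensor f' g).
Proof. by move=> Df Df' Dg ff'; apply: tensor_mono. Qed.

Lemma tensor_monor f g g' : isDelta f -> isDelta g -> isDelta g' -> dle g g' ->
  dle (tensor f g) (tensor f g').
Proof. by move=> Df Dg Dg' gg'; apply: tensor_mono. Qed.

(** * Delta-categories *)

Section DCatFacts.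
Variable X : DStruct R.
Hypothesis HX : isDCat X.

Lemma DCat_Delta x y : isDelta (dist X x y). Proof. by case: HX. Qed.

Lemma DCat_refl x : dle eps (dist X x x). Proof. by case: HX. Qed.

Lemma DCat_trans x y z : dle (tensor (dist X x y) (dist X y z)) (dist X x z).
Proof. by case: HX. Qed.

Lemma DCat_comp u v x y z : isDelta u -> isDelta v ->
  dle u (dist X x y) -> dle v (dist X y z) -> dle (tensor u v) (dist X x z).
Proof.
move=> Du Dv uxy vyz; apply: dle_trans (DCat_trans x y z).
by apply: tensor_mono => //; apply: DCat_Delta.
Qed.

Lemma Delta_le_dist_refl f x : isDelta f -> dle f (dist X x x).
Proof. by move=> Df; apply: dle_trans (Delta_le_eps Df) (DCat_refl x). Qed.

End DCatFacts.

Definition prodS (X Y : DStruct R) : DStruct R :=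
  @DStr R (car X * car Y)%type (fun p q => dmin (dist X p.1 q.1) (dist Y p.2 q.2)).

Lemma prodS_DCat X Y : isDCat X -> isDCat Y -> isDCat (prodS X Y).
Proof.
move=> HX HY; split.
- by move=> p q; apply: dmin_Delta; apply: DCat_Delta.
- by move=> p; apply: dle_dmin; apply: DCat_refl.
- move=> p q r /=; have DX := DCat_Delta HX; have DY := DCat_Delta HY.
  apply: dle_dmin; [apply: (DCat_comp HX)|apply: (DCat_comp HY)];
    by [apply: dmin_Delta|exact: dmin_lel|exact: dmin_ler].
Qed.

Lemma functor_id (X : DStruct R) : functor (@id (car X)).
Proof. by move=> x x'; exact: dle_refl. Qed.

Lemma functor_comp (X Y Z : DStruct R) (f : car X -> car Y) (g : car Y -> car Z) :
  functor f -> functor g -> functor (g \o f).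
Proof. by move=> Ff Fg x x'; apply: dle_trans (Ff x x') (Fg _ _). Qed.

Lemma functor_pair (Z X Y : DStruct R) (f1 : car Z -> car X) (f2 : car Z -> car Y) :
  functor f1 -> functor f2 -> functor (fun z => (f1 z, f2 z) : car (prodS X Y)).
Proof. by move=> F1 F2 z z'; apply: dle_dmin; [exact: F1|exact: F2]. Qed.

Lemma functor_fst X Y : functor (fst : car (prodS X Y) -> car X).
Proof. by move=> p q; exact: dmin_lel. Qed.

Lemma functor_snd X Y : functor (snd : car (prodS X Y) -> car Y).
Proof. by move=> p q; exact: dmin_ler. Qed.

(* [X] together with a formal point [None] lying [p] after [x0] and [q] before [x2]. *)
Definition adjoin (X : DStruct R) (x0 x2 : car X) (p q : R -> R) : DStruct R :=
  @DStr R (option (car X)) (fun o o' => match o, o' with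
    | Some x, Some x' => dist X x x'
    | Some x, None => tensor (dist X x x0) p
    | None, Some x => tensor q (dist X x2 x)
    | None, None => eps end).

Lemma adjoin_DCat X x0 x2 p q : isDCat X -> isDelta p -> isDelta q ->
  dle (tensor p q) (dist X x0 x2) -> isDCat (adjoin x0 x2 p q).
Proof.
move=> HX Dp Dq pq; have DX := DCat_Delta HX.
have Dxp x := tensor_Delta (DX x x0) Dp; have Dqx x := tensor_Delta Dq (DX x2 x).
split.
- by case=> [x|] [x'|] /=; [| | | exact: eps_Delta].
- by case=> [x|] /=; [exact: DCat_refl|exact: dle_refl].
- case=> [x|] [y|] [z|] /=.
  + exact: DCat_trans.
  + apply: dle_trans (tensorA_le (DX _ _) (DX _ _) Dp) _.
    by apply: tensor_monol => //; [exact: tensor_Delta|exact: DCat_trans].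
  + apply: dle_trans (tensorA_le (Dxp x) Dq (DX _ _)) _.
    apply: (DCat_comp HX) => //; first exact: tensor_Delta.
    apply: dle_trans (tensorA_ge (DX _ _) Dp Dq) _.
    by apply: (DCat_comp HX) => //; exact: tensor_Delta.
  + exact: deq_le (tensor_epsr (Dxp x)).
  + apply: dle_trans (tensorA_ge Dq (DX _ _) (DX _ _)) _.
    by apply: tensor_monor => //; [exact: tensor_Delta|exact: DCat_trans].
  + exact: Delta_le_eps (tensor_Delta (Dqx y) (Dxp y)).
  + exact: deq_le (tensor_epsl (Dqx z)).
  + exact: Delta_le_eps (tensor_Delta eps_Delta eps_Delta).
Qed.

Lemma dinjective_between (X : DStruct R) (x0 x2 : car X) p q : isDCat X -> dinjective X ->
  isDelta p -> isDelta q -> dle (tensor p q) (dist X x0 x2) ->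
  exists x1, dle p (dist X x0 x1) /\ dle q (dist X x1 x2).
Proof.
move=> HX IX Dp Dq pq; have DX := DCat_Delta HX.
have [g [Fg gK]] := IX X (adjoin x0 x2 p q) Some HX (adjoin_DCat HX Dp Dq pq)
  (@functor_id X) (fun x x' t _ => erefl) id (@functor_id X).
exists (g None); split.
- apply: dle_trans (deq_ge (tensor_epsl Dp)) _.
  apply: (DCat_comp HX (y := g (Some x0))); [exact: eps_Delta|done|exact: (gK x0).2|].
  apply: dle_trans (Fg (Some x0) None) => /=.
  apply: dle_trans (deq_ge (tensor_epsl Dp)) _.
  by apply: tensor_monol => //; [exact: eps_Delta|exact: DCat_refl].
- apply: dle_trans (deq_ge (tensor_epsr Dq)) _.
  apply: (DCat_comp HX (y := g (Some x2))); [done|exact: eps_Delta| |exact: (gK x2).1].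
  apply: dle_trans (Fg None (Some x2)) => /=.
  apply: dle_trans (deq_ge (tensor_epsr Dq)) _.
  by apply: tensor_monor => //; [exact: eps_Delta|exact: DCat_refl].
Qed.

(** * Exponentials *)

Lemma tensor_step_le c r s a b : isDelta c -> a * b <= c (r + s) ->
  dle (tensor (step r a) (step s b)) c.
Proof.
move=> Dc abc t t0; apply: tensor_le => [|r' s' r'0 s'0 rst]; first exact: Delta_ge0.
rewrite /step; case: (leP r' r) => rr'; first by rewrite mul0r Delta_ge0.
case: (leP s' s) => ss'; first by rewrite mulr0 Delta_ge0.
by apply: le_trans abc (Delta_mono Dc _); lra.
Qed.

Definition exp_bound (X Y : DStruct R) (phi psi : car X -> car Y) w : Prop :=
  isDelta w /\ forall x x', dle (dmin w (dist X x x')) (dist Y (phi x) (psi x')).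

Lemma exp_bound_le (X Y : DStruct R) (phi psi : car X -> car Y) w x x' t a :
  exp_bound phi psi w -> 0 <= t -> a <= w t -> a <= dist X x x' t ->
  a <= dist Y (phi x) (psi x') t.
Proof. by move=> [_ B] t0 aw ad; apply: le_trans (B x x' t t0); rewrite le_min aw ad. Qed.

Section Interpolation.
Variables (X Y : DStruct R).
Hypotheses (HX : isDCat X) (IX : dinjective X) (HY : isDCat Y).
Variables (phi psi chi : car X -> car Y) (u v : R -> R).
Hypotheses (Bu : exp_bound phi psi u) (Bv : exp_bound psi chi v).

Let Du := Bu.1.
Let Dv := Bv.1.
Let DY := DCat_Delta HY.

(* With step heights [a = u r] and [b] chosen so that [a * b] is the left-hand
   side, injectivity of [X] provides a point [x1] splitting [x0 -> x2] at
   [(r, s)]; then [psi x1] splits [phi x0 -> chi x2]. *)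
Lemma exp_bound_tensor_split x0 x2 r s t : 0 < r -> 0 < s -> r + s < t ->
  Num.min (u r * v s) (dist X x0 x2 (r + s)) <= dist Y (phi x0) (chi x2) t.
Proof.
move=> r0 s0 rst; set a := u r; set k := Num.min (a * v s) _.
have a0 : 0 <= a := Delta_ge0 Du r.
have [a0'|an0] := eqVneq a 0; first by rewrite /k a0' mul0r ge_min (Delta_ge0 (DY _ _)).
have ap : 0 < a by rewrite lt_def an0.
pose b := k / a.
have b0 : 0 <= b.
  by rewrite divr_ge0 // le_min mulr_ge0 ?(Delta_ge0 Dv) ?(Delta_ge0 (DCat_Delta HX _ _)).
have bv : b <= v s by rewrite ler_pdivrMr // mulrC ge_min lexx.
have ab : a * b = k by rewrite mulrC divfK ?lt0r_neq0.
have Dp : isDelta (step r a) by apply: step_Delta; [exact: ltW|rewrite a0 (Delta_le1 Du)].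
have Dq : isDelta (step s b).
  by apply: step_Delta; [exact: ltW|rewrite b0 (le_trans bv) ?(Delta_le1 Dv)].
have pq : dle (tensor (step r a) (step s b)) (dist X x0 x2).
  by apply: tensor_step_le; [exact: DCat_Delta|rewrite ab ge_min lexx orbT].
have [x1 [p1 q1]] := dinjective_between HX IX Dp Dq pq.
pose d := (t - (r + s)) / 2.
have Q1 : a <= dist Y (phi x0) (psi x1) (r + d).
  apply: (exp_bound_le Bu); rewrite /d; try lra.
    by apply: (Delta_mono Du); lra.
  by apply: le_trans (p1 _ _); rewrite ?step_gt; lra.
have Q2 : b <= dist Y (psi x1) (chi x2) (s + d).
  apply: (exp_bound_le Bv); rewrite /d; try lra.
    by apply: le_trans bv (Delta_mono Dv _); lra.
  by apply: le_trans (q1 _ _); rewrite ?step_gt; lra.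
have t0 : 0 <= t by lra.
have rsd : (r + d) + (s + d) <= t by rewrite /d; lra.
rewrite -ab; apply: le_trans (DCat_trans HY (phi x0) (psi x1) (chi x2) t0).
apply: le_trans (tensor_ub (DY _ _) (DY _ _) _ _ rsd); rewrite /d; try lra.
by rewrite ler_pM.
Qed.

Lemma exp_bound_tensor : exp_bound phi chi (tensor u v).
Proof.
split=> [|x0 x2 t t0]; first exact: tensor_Delta.
have DX := DCat_Delta HX.
rewrite leNgt; apply/negP; rewrite lt_min => /andP[hU hC].
have [y y_t By] := Delta_approx (DX x0 x2) hC.
have [r [s [r0 s0 rst Brs]]] := tensor_approx Du Dv (Delta_ge0 (DY _ _) _) hU.
pose z := Num.max (r + s) y.
have rsz : r + s <= z by rewrite le_max lexx.
have yz : y <= z by rewrite le_max lexx orbT.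
have zt : z < t by rewrite gt_max rst y_t.
have := @exp_bound_tensor_split x0 x2 (r + (z - (r + s))) s t.
rewrite (_ : r + (z - (r + s)) + s = z); last lra.
move=> /(_ ltac:(lra) s0 zt); apply/negP; rewrite -ltNge lt_min.
rewrite (lt_le_trans Brs) ?(lt_le_trans By) ?(Delta_mono (DX _ _)) //.
by rewrite ler_wpM2r ?(Delta_ge0 Dv) ?(Delta_mono Du) //; lra.
Qed.

End Interpolation.

Definition funS (X Y : DStruct R) := {phi : car X -> car Y | functor phi}.

(* Products are formed with [/\], so the exponential distance is the Heyting
   implication of [Delta]: the join of all bounds in the sense of [exp_bound]. *)
Definition expS (X Y : DStruct R) : DStruct R :=
  @DStr R (funS X Y) (fun phi psi => psup (exp_bound (sval phi) (sval psi))).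

Lemma funS_ext (X Y : DStruct R) (phi psi : funS X Y) :
  (forall x, sval phi x = sval psi x) -> phi = psi.
Proof.
case: phi psi => [f Ff] [g Fg] /= fg; have efg : f = g by apply: funext.
by subst g; congr exist; exact: Prop_irrelevance.
Qed.

Section Exponential.
Variables X Y : DStruct R.
Implicit Types phi psi : funS X Y.

Lemma expS_Delta phi psi : isDelta (dist (expS X Y) phi psi).
Proof. by apply: psup_Delta => w []. Qed.

Lemma expS_ge phi psi w : exp_bound (sval phi) (sval psi) w -> dle w (dist (expS X Y) phi psi).
Proof. by move=> Bw t t0; apply: psup_ub => // w' []. Qed.

Lemma expS_bound phi psi : isDCat Y -> exp_bound (sval phi) (sval psi) (dist (expS X Y) phi psi).
Proof.
move=> HY; split=> [|x x' t t0]; first exact: expS_Delta.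
rewrite leNgt; apply/negP; rewrite lt_min => /andP[hw hd].
have [w [_ Bw] /lt_le_trans ltw] := psup_approx (Delta_ge0 (DCat_Delta HY _ _) t) hw.
by have := Bw x x' t t0; apply/negP; rewrite -ltNge lt_min ltw.
Qed.

Lemma expS_DCat : isDCat X -> dinjective X -> isDCat Y -> isDCat (expS X Y).
Proof.
move=> HX IX HY; split.
- exact: expS_Delta.
- move=> phi; apply: expS_ge; split=> [|x x']; first exact: eps_Delta.
  by apply: dle_trans (dmin_ler _ _) (svalP phi x x').
- move=> phi psi chi; apply: expS_ge.
  by apply: (exp_bound_tensor HX IX HY (psi := sval psi)); apply: expS_bound.
Qed.

End Exponential.

Definition ev (X Y : DStruct R) (p : car (prodS X (expS X Y))) : car Y := sval p.2 p.1.

Lemma functor_ev X Y : isDCat Y -> functor (@ev X Y).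
Proof.
move=> HY [x phi] [x' psi] t t0 /=; rewrite /dmin minC.
exact: (expS_bound phi psi HY).2.
Qed.

Section Currying.
Variables (X Y Z Q : DStruct R) (q1 : car Q -> car X) (q2 : car Q -> car Z).
Hypotheses (HX : isDCat X) (HZ : isDCat Z).
Variables (f : car Q -> car Y) (k : car (prodS X Z) -> car Q).
Hypotheses (Ff : functor f) (Fk : functor k).
Hypothesis kK : forall p, q1 (k p) = p.1 /\ q2 (k p) = p.2.

Lemma functor_curry_at z : functor (fun x => f (k (x, z))).
Proof.
move=> x x'; apply: dle_trans (Ff _ _); apply: dle_trans (Fk (x, z) (x', z)).
exact: dle_dmin (dle_refl _) (Delta_le_dist_refl HZ z (DCat_Delta HX x x')).
Qed.

Definition curry z : funS X Y := exist _ _ (functor_curry_at z).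

Lemma functor_curry : functor (curry : car Z -> car (expS X Y)).
Proof.
move=> z z'; apply: expS_ge; split=> [|x x']; first exact: DCat_Delta.
by apply: dle_trans (Ff _ _); apply: dle_trans (Fk (x, z) (x', z')) => t _; rewrite /dmin /= minC.
Qed.

Lemma curry_unique (g : car Z -> car (expS X Y)) (h : car Q -> car (prodS X (expS X Y))) :
  meq (fst \o h) q1 -> meq (snd \o h) (g \o q2) -> meq (@ev X Y \o h) f -> meq g curry.
Proof.
move=> h1 h2 hf z; apply: funS_ext => x /=.
have [kx kz] := kK (x, z); rewrite -(hf (k (x, z))) /= /ev.
by move: (h1 (k (x, z))) (h2 (k (x, z))) => /= -> ->; rewrite kx kz.
Qed.

End Currying.

Section Universality.
Variable S : DStruct R -> Prop.
Hypothesis SD : forall Z, S Z -> isDCat Z.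
Hypothesis Sprod : forall Z W, S Z -> S W -> S (prodS Z W).

Lemma prodS_product X Y : S X -> S Y -> @product_in R S X Y (prodS X Y) fst snd.
Proof.
move=> SX SY; split; [exact: Sprod|exact: (@functor_fst X Y)|exact: (@functor_snd X Y)|].
move=> Z SZ f1 f2 F1 F2; split.
  by exists (fun z => (f1 z, f2 z)); split => //; exact: functor_pair.
move=> h h' _ _ e1 e2 e1' e2' z.
rewrite [h z]surjective_pairing [h' z]surjective_pairing.
by move: (e1 z) (e2 z) (e1' z) (e2' z) => /= -> -> -> ->.
Qed.

Lemma product_in_pairing X Z Q (q1 : car Q -> car X) (q2 : car Q -> car Z) :
  S X -> S Z -> @product_in R S X Z Q q1 q2 ->
  exists k : car (prodS X Z) -> car Q, [/\ functor k,
    forall p, q1 (k p) = p.1 /\ q2 (k p) = p.2 & forall q, k (q1 q, q2 q) = q].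
Proof.
move=> SX SZ [SQ Fq1 Fq2 UQ].
have [[k [Fk k1 k2]] _] := UQ _ (Sprod SX SZ) fst snd (@functor_fst X Z) (@functor_snd X Z).
exists k; split=> [//|p|q]; first by split; [exact: k1|exact: k2].
have [_ U] := UQ Q SQ q1 q2 Fq1 Fq2.
apply: (U (fun q => k (q1 q, q2 q)) id) => //=.
- by apply: (functor_comp (Y := prodS X Z)) => //; exact: functor_pair.
- exact: functor_id.
- by move=> q'; exact: (k1 (q1 q', q2 q')).
- by move=> q'; exact: (k2 (q1 q', q2 q')).
Qed.

Lemma exponentiable_in_expS X : S X -> (forall Y, S Y -> S (expS X Y)) ->
  exponentiable_in S X.
Proof.
move=> SX SE Y SY; have HX := SD SX.
exists (expS X Y), (prodS X (expS X Y)), fst, snd, (@ev X Y).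
split; [exact: SE|exact: prodS_product (SE Y SY)|exact: functor_ev (SD SY)|].
move=> Z SZ Q q1 q2 PQ f Ff; have HZ := SD SZ.
have [k [Fk kK qK]] := product_in_pairing SX SZ PQ.
have [_ _ Fq2 _] := PQ.
split=> [|g g' _ _ [h [[_ h1 h2] hf]] [h' [[_ h1' h2'] hf']] z].
  exists (curry HX HZ Ff Fk); split; first exact: functor_curry.
  exists (fun q => (q1 q, curry HX HZ Ff Fk (q2 q))); split=> [|q]; last by rewrite /ev /= qK.
  split=> //; apply: functor_pair; first by case: PQ.
  exact: functor_comp Fq2 (functor_curry _ _ _ _).
by rewrite (curry_unique HX HZ Ff Fk kK h1 h2 hf) (curry_unique HX HZ Ff Fk kK h1' h2' hf').
Qed.

End Universality.

(** * Injective Delta-categories *)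

Lemma prodS_dinjective X Y : dinjective X -> dinjective Y -> dinjective (prodS X Y).
Proof.
move=> IX IY A B i HA HB Fi FFi f Ff.
have [g1 [Fg1 iso1]] := IX A B i HA HB Fi FFi _ (functor_comp Ff (@functor_fst X Y)).
have [g2 [Fg2 iso2]] := IY A B i HA HB Fi FFi _ (functor_comp Ff (@functor_snd X Y)).
exists (fun b => (g1 b, g2 b)); split; first exact: functor_pair.
move=> a; split; apply: dle_dmin;
  [exact: (iso1 a).1|exact: (iso2 a).1|exact: (iso1 a).2|exact: (iso2 a).2].
Qed.

Lemma exp_bound_eps X Y (phi psi : car X -> car Y) : isDCat X -> isDCat Y ->
  functor phi -> (forall x, dle eps (dist Y (phi x) (psi x))) -> exp_bound phi psi eps.
Proof.
move=> HX HY Fphi phipsi; split=> [|x x']; first exact: eps_Delta.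
apply: dle_trans (dmin_ler _ _) _; apply: dle_trans (deq_ge (tensor_epsr (DCat_Delta HX x x'))) _.
by apply: (DCat_comp HY) => //; [exact: DCat_Delta|exact: eps_Delta].
Qed.

Section ExponentialInjective.
Variables X Y : DStruct R.
Hypotheses (HX : isDCat X) (HY : isDCat Y) (IY : dinjective Y).
Variables (A B : DStruct R) (i : car A -> car B).
Hypotheses (HA : isDCat A) (HB : isDCat B) (Fi : functor i) (FFi : fully_faithful i).

Definition prod_mapr (p : car (prodS X A)) : car (prodS X B) := (p.1, i p.2).

Lemma functor_prod_mapr : functor prod_mapr.
Proof.
by move=> p q; apply: dle_dmin; [exact: dmin_lel|exact: dle_trans (dmin_ler _ _) (Fi _ _)].
Qed.

Lemma fully_faithful_prod_mapr : fully_faithful prod_mapr.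
Proof. by move=> p q t t0; rewrite /= /dmin /= (FFi _ _ t0). Qed.

Lemma expS_extension (F : car A -> car (expS X Y)) : functor F ->
  exists G : car B -> car (expS X Y), functor G /\ fiso (G \o i) F.
Proof.
move=> FF; have FU : functor (fun p : car (prodS X A) => sval (F p.2) p.1).
  move=> [x a] [x' a'] t t0 /=; apply: le_trans ((expS_bound (F a) (F a') HY).2 x x' t t0).
  by rewrite /dmin /= minC le_min !ge_min lexx orbT (FF a a' t t0).
have [G' [FG' isoG']] := @IY (prodS X A) (prodS X B) prod_mapr (prodS_DCat HX HA) (prodS_DCat HX HB)
  functor_prod_mapr fully_faithful_prod_mapr _ FU.
exists (curry HX HB FG' (@functor_id (prodS X B))); split; first exact: functor_curry.
move=> a; split; apply: expS_ge; apply: exp_bound_eps => //; try exact: svalP.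
- by move=> x; exact: (isoG' (x, a)).1.
- by move=> x; exact: (isoG' (x, a)).2.
Qed.

End ExponentialInjective.

Lemma expS_dinjective X Y : isDCat X -> isDCat Y -> dinjective Y -> dinjective (expS X Y).
Proof. by move=> HX HY IY A B i HA HB Fi FFi; apply: expS_extension. Qed.

Lemma tensor_psup_le (F : set (R -> R)) g h : (forall w, F w -> isDelta w) ->
  isDelta g -> isDelta h -> (forall w, F w -> dle (tensor w g) h) ->
  dle (tensor (psup F) g) h.
Proof.
move=> DF Dg Dh Fgh t t0; apply: tensor_le => [|r s r0 s0 rst]; first exact: Delta_ge0.
apply: sup_mulr_le; rewrite ?(Delta_ge0 Dg) ?(Delta_ge0 Dh) // => _ [w Fw <-].
by apply: le_trans (Fgh w Fw t t0); apply: tensor_ub => //; apply: DF.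
Qed.

Lemma homD_psup f g : homD f g = psup [set h | isDelta h /\ dle (tensor f h) g].
Proof.
apply: funext => t; rewrite /homD /psup; congr sup; apply: funext => x; apply: propext.
by split=> [[h [Dh fhg ->]]|[h [Dh fhg] <-]]; exists h.
Qed.

Lemma homD_Delta f g : isDelta (homD f g).
Proof. by rewrite homD_psup; apply: psup_Delta => h []. Qed.

Lemma homD_ge f g h : isDelta h -> dle (tensor f h) g -> dle h (homD f g).
Proof. by move=> Dh fhg t t0; rewrite homD_psup; apply: psup_ub => // w []. Qed.

Lemma tensor_homD f g : isDelta f -> isDelta g -> dle (tensor f (homD f g)) g.
Proof.
move=> Df Dg t t0; rewrite tensorC homD_psup.
apply: tensor_psup_le => // [w [] //|w [Dw fwg] t' t'0].
by rewrite tensorC; apply: fwg.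
Qed.

Lemma DeltaCat_DCat : isDCat (DeltaCat R).
Proof.
split=> [f g|[f Df]|[f Df] [g Dg] [h Dh]] /=; first exact: homD_Delta.
  by apply: homD_ge; [exact: eps_Delta|exact: deq_le (tensor_epsr Df)].
apply: homD_ge; first by apply: tensor_Delta; exact: homD_Delta.
apply: dle_trans (tensorA_le Df (homD_Delta _ _) (homD_Delta _ _)) _.
apply: dle_trans (tensor_homD Dg Dh).
apply: tensor_monol; [exact: tensor_Delta Df (homD_Delta _ _)|done|exact: homD_Delta|].
exact: tensor_homD.
Qed.

Section DeltaExtension.
Variables (A B : DStruct R) (i : car A -> car B) (F : car A -> DeltaSet R).
Hypotheses (HB : isDCat B) (FFi : fully_faithful i).
Hypothesis FF : functor (F : car A -> car (DeltaCat R)).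

Let DB := DCat_Delta HB.
Let DF a : isDelta (sval (F a)) := svalP (F a).

(* The left Kan extension [lan b = \/_a F a (x) B(i a, b)]. *)
Definition lan_family b := [set w | exists a, w = tensor (sval (F a)) (dist B (i a) b)].

Lemma lan_family_Delta b w : lan_family b w -> isDelta w.
Proof. by move=> [a ->]; apply: tensor_Delta. Qed.

Definition lan b : DeltaSet R := exist _ _ (psup_Delta (@lan_family_Delta b)).

Lemma lan_ub a b : dle (tensor (sval (F a)) (dist B (i a) b)) (sval (lan b)).
Proof. by move=> t t0; apply: psup_ub; [exact: lan_family_Delta|exists a]. Qed.

Lemma functor_lan : functor (lan : car B -> car (DeltaCat R)).
Proof.
move=> b b'; apply: homD_ge => //; apply: tensor_psup_le => //; first exact: lan_family_Delta.
  exact: svalP.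
move=> _ [a ->]; apply: dle_trans (tensorA_ge (DF a) (DB _ _) (DB _ _)) _.
apply: dle_trans (lan_ub a b'); apply: tensor_monor => //; first exact: tensor_Delta.
exact: DCat_trans.
Qed.

Lemma lan_iso : fiso ((lan : car B -> car (DeltaCat R)) \o i) F.
Proof.
move=> a; split; apply: homD_ge; try exact: eps_Delta.
- apply: dle_trans (deq_le (tensor_epsr (svalP (lan (i a))))) _.
  move=> t t0; apply: psup_le => [|_ [a' ->]]; first exact: Delta_ge0 (DF a) _.
  apply: le_trans (tensor_homD (DF a') (DF a) t0).
  apply: (tensor_monor (DF a') (DB _ _) (homD_Delta _ _)) => // t' t'0.
  by rewrite -(FFi a' a t'0); exact: FF a' a _ t'0.
- apply: dle_trans (lan_ub a (i a)); apply: tensor_monor => //; first exact: eps_Delta.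
  exact: DCat_refl.
Qed.

End DeltaExtension.

Lemma DeltaCat_dinjective : dinjective (DeltaCat R).
Proof.
move=> A B i HA HB Fi FFi F FF.
by exists (lan i F HB); split; [exact: functor_lan|exact: lan_iso].
Qed.

Definition unitS : DStruct R := @DStr R unit (fun _ _ => eps).

Lemma unitS_DCat : isDCat unitS.
Proof.
split=> [x y|x|x y z]; [exact: eps_Delta|exact: dle_refl|].
exact: Delta_le_eps (tensor_Delta eps_Delta eps_Delta).
Qed.

Lemma unitS_dinjective : dinjective unitS.
Proof.
move=> A B i HA HB Fi FFi f Ff; exists (fun _ => tt); split=> [b b'|a].
  exact: Delta_le_eps (DCat_Delta HB b b').
by split; exact: dle_refl.
Qed.

Lemma InjCat_terminal : terminal_in (@InjCat R) unitS.
Proof.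
split=> [|Z [HZ _]]; first by split; [exact: unitS_DCat|exact: unitS_dinjective].
split=> [|f g _ _ z]; last by case: (f z); case: (g z).
by exists (fun _ => tt) => z z'; exact: Delta_le_eps (DCat_Delta HZ z z').
Qed.

Lemma InjCat_prodS (X Y : DStruct R) : InjCat X -> InjCat Y -> InjCat (prodS X Y).
Proof. by move=> [HX IX] [HY IY]; split; [exact: prodS_DCat|exact: prodS_dinjective]. Qed.

Lemma InjCat_expS (X Y : DStruct R) : InjCat X -> InjCat Y -> InjCat (expS X Y).
Proof. by move=> [HX IX] [HY IY]; split; [exact: expS_DCat|exact: expS_dinjective]. Qed.

Lemma dinjective_exponentiable (X : DStruct R) : isDCat X -> dinjective X -> exponentiable X.
Proof.
move=> HX IX; apply: exponentiable_in_expS => // [Z W|Y HY]; first exact: prodS_DCat.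
exact: expS_DCat.
Qed.

Lemma InjCat_cartesian_closed : cartesian_closed (@InjCat R).
Proof.
split=> [|X Y IX IY|X IX]; first by exists unitS; exact: InjCat_terminal.
  by exists (prodS X Y), fst, snd; apply: prodS_product => //; exact: InjCat_prodS.
by apply: exponentiable_in_expS => // [Z []|Z W|Y]; [|exact: InjCat_prodS|exact: InjCat_expS].
Qed.

End DeltaQuantale.

Theorem theorem4p5 (R : realType) :
  [/\ (forall X : DStruct R, isDCat X -> dinjective X -> exponentiable X),
      isDCat (DeltaCat R) /\ exponentiable (DeltaCat R) &
      cartesian_closed (@InjCat R)].
Proof.
split; [exact: dinjective_exponentiable| |exact: InjCat_cartesian_closed].
have HD := DeltaCat_DCat R.
by split=> //; apply: dinjective_exponentiable => //; exact: DeltaCat_dinjective.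
Qed.
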